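(* Let $K$ be a field and $P$ an arbitrary poset. An element $\alpha\in FI(P)$ is regular (i.e. there exists $\chi\in FI(P)$ with $\alpha\chi\alpha=\alpha$) if and only if there exist a diagonal idempotent $\varepsilon\in FI(P)$ and invertible elements $\beta,\gamma\in FI(P)$ such that $\alpha=\beta\varepsilon\gamma$.
   Context: $K$ is a field, $P$ an arbitrary poset. $I(P)$ is the set of functions $\alpha$ assigning to each pair $x\le y$ in $P$ a value $\alpha(x,y)\in K$. An element $\alpha\in I(P)$ is a finitary series if for all $x<y$ in $P$ there are only finitely many pairs $(u,v)$ with $x\le u<v\le y$ and $\alpha(u,v)\neq0$; $FI(P)$ is the set of finitary series. $FI(P)$ is an associative $K$-algebra under pointwise addition and convolution $(\alpha\beta)(x,y)=\sum_{x\le z\le y}\alpha(x,z)\beta(z,y)$, with identity $\delta$ given by $\delta(x,y)=1$ if $x=y$ and $0$ otherwise. An element $\alpha\in FI(P)$ is diagonal if $\alpha(x,y)=0$ whenever $x\neq y$; a diagonal element is idempotent iff each $\alpha(x,x)\in\{0,1\}$. *)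

From HB Require Import structures.
From mathcomp Require Import all_boot all_order all_algebra.
From Stdlib Require Import Classical ClassicalEpsilon.
Set Implicit Arguments. Unset Strict Implicit. Unset Printing Implicit Defensive.
Import Order.TTheory GRing.Theory.
Local Open Scope order_scope.

Section FI.
Variables (K : fieldType) (d : Order.disp_t) (P : porderType d).

(* Elements of I(P) are represented by functions P -> P -> K; only the
   values on pairs x <= y matter (see eqI). *)
Definition series := P -> P -> K.

(* Sum of a finitely supported family over the (possibly infinite) type P.
   If the support is finite, this is the sum over any finite superset of
   the support (independent of the chosen superset); otherwise 0 (never used). *)
Definition fsupp_seq (f : P -> K) : seq P :=
  match excluded_middle_informative
          (exists s : seq P, forall z, f z != 0%R -> z \in s) with
  | left H => proj1_sig (constructive_indefinite_description _ H)
  | right _ => [::]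
  end.

Definition fsum (f : P -> K) : K := (\sum_(z <- undup (fsupp_seq f)) f z)%R.

Definition conv (a b : series) : series :=
  fun x y => fsum (fun z => if (x <= z) && (z <= y) then (a x z * b z y)%R else 0%R).

Definition delta : series := fun x y => if x == y then 1%R else 0%R.

Definition eqI (a b : series) : Prop := forall x y, x <= y -> a x y = b x y.

Definition finitary (a : series) : Prop :=
  forall x y, x < y -> exists s : seq (P * P),
    forall u v, x <= u -> u < v -> v <= y -> a u v != 0%R -> (u, v) \in s.

Definition diagonal (a : series) : Prop :=
  forall x y, x <= y -> x != y -> a x y = 0%R.

Definition idempotentI (a : series) : Prop := eqI (conv a a) a.

Definition invertibleI (a : series) : Prop :=
  exists b, finitary b /\ eqI (conv a b) delta /\ eqI (conv b a) delta.

Definition regularI (a : series) : Prop :=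
  exists c, finitary c /\ eqI (conv (conv a c) a) a.

End FI.

Set Warnings "-notation-overridden,-ambiguous-paths,-notation-incompatible-prefix,-redundant-canonical-projection".
From HB Require Import structures.
From mathcomp Require Import all_boot all_order all_algebra.
From mathcomp Require Import boolp.
Set Implicit Arguments. Unset Strict Implicit. Unset Printing Implicit Defensive.
Import Order.TTheory GRing.Theory.
Local Open Scope ring_scope.
Local Open Scope order_scope.

(* The proof realises FI(P) as a ring [fi K P] and reduces the theorem to
   ring theory plus one analytic fact about FI(P):
   - finitely supported sums over P ([fsum]) and the convolution calculus
     (FI(P) is closed under convolution, which is associative) give the ring
     structure on normalized finitary series;
   - in any ring, [a x a = a] and an idempotent [e] whose "links" with the
     idempotents [x a] and [a x] are invertible yield [a = b e c] with [b],
     [c] invertible; conversely such a product is always regular;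
   - in FI(P), an element whose diagonal is identically 1 is invertible (a
     locally finite geometric series), and taking diagonals is multiplicative;
     so taking for [e] the diagonal of [x a] makes both links invertible. *)

Lemma count_sub_lt (T : eqType) (p q : pred T) (s : seq T) z :
  subpred p q -> z \in s -> q z -> ~~ p z -> (count p s < count q s)%N.
Proof.
move=> hpq; elim: s => [|h s IH] //=; rewrite inE => hz qz pz.
have hc : (count p s <= count q s)%N by apply: sub_count.
have [<-|ne] := eqVneq z h; first by rewrite qz (negbTE pz) add0n add1n ltnS.
have hh : (p h <= q h)%N by case: (p h) (@hpq h) => // ->.
by rewrite (negbTE ne) /= in hz; rewrite -addnS leq_add // IH.
Qed.

Lemma sum_ord_trunc (V : nmodType) (F : nat -> V) (M N : nat) :
  (forall k, (M <= k)%N -> F k = 0) -> (M <= N)%N ->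
  \sum_(k < N) F k = \sum_(k < M) F k.
Proof.
move=> hF hMN; rewrite [RHS](big_ord_widen _ F hMN) [RHS]big_mkcond /=.
by apply: eq_bigr => i _; case: ltnP => // /hF.
Qed.

Section RingFacts.
Variable R : pzRingType.
Implicit Types (a b c e f u x y z : R).

Definition invertible u := exists v, u * v = 1 /\ v * u = 1.

Lemma invertibleM b c : invertible b -> invertible c -> invertible (b * c).
Proof.
move=> [b' [bb' b'b]] [c' [cc' c'c]]; exists (c' * b'); split.
  by rewrite -mulrA (mulrA c) cc' mul1r.
by rewrite -mulrA (mulrA b') b'b mul1r.
Qed.

Lemma mulr_lift2 x y z t : x * y = t -> z * x * y = z * t.
Proof. by move=> <-; rewrite mulrA. Qed.

Lemma mulr_lift3 x y u z t : x * y * u = t -> z * x * y * u = z * t.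
Proof. by move=> <-; rewrite !mulrA. Qed.

Lemma geom_sum_l (n : R) M : (1 - n) * \sum_(k < M) n ^+ k = 1 - n ^+ M.
Proof. by rewrite -[1 - n]opprB mulNr -subrX1 opprB. Qed.

Lemma geom_sum_r (n : R) M : (\sum_(k < M) n ^+ k) * (1 - n) = 1 - n ^+ M.
Proof.
have cn : GRing.comm (1 - n) n by apply/commr_sym/commrB; [apply: commr1 | apply: commr_refl].
have cs : GRing.comm (1 - n) (\sum_(k < M) n ^+ k).
  by apply: commr_sum => k _; apply: commrX.
by rewrite -cs geom_sum_l.
Qed.

(* Given idempotents [f] and [e], the element [idem_link f e] intertwines
   them; when it is invertible, [f] and [e] are conjugate. *)
Definition idem_link f e := f * e + (1 - f) * (1 - e).

Lemma idem_link_intertwines f e : f * f = f -> e * e = e ->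
  f * idem_link f e = idem_link f e * e.
Proof.
move=> hf he.
have hf0 : f * (1 - f) = 0 by rewrite mulrBr mulr1 hf subrr.
have he0 : (1 - e) * e = 0 by rewrite mulrBl mul1r he subrr.
rewrite /idem_link (mulrDr f (f * e)) (mulrDl (f * e)) !mulrA hf hf0 mul0r -(mulrA f e e) he.
by rewrite -(mulrA (1 - f)) he0 mulr0.
Qed.

Lemma corner_invertible e y y' : e * e = e ->
  (e * y * e) * (e * y' * e) = e -> (e * y' * e) * (e * y * e) = e ->
  invertible (e * y * e + (1 - e)).
Proof.
move=> he hm hm'.
have he0 : (1 - e) * e = 0 by rewrite mulrBl mul1r he subrr.
have hc : (1 - e) * (1 - e) = 1 - e by rewrite mulrBr mulr1 he0 subr0.
have zl t : (e * t * e) * (1 - e) = 0 by rewrite mulrBr mulr1 -(mulrA (e * t) e) he subrr.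
have zr t : (1 - e) * (e * t * e) = 0 by rewrite !mulrA he0 !mul0r.
exists (e * y' * e + (1 - e)); split.
  by rewrite (mulrDl (e * y * e)) !(mulrDr _ (e * y' * e)) hm hc !zl !zr addr0 add0r subrKC.
by rewrite (mulrDl (e * y' * e)) !(mulrDr _ (e * y * e)) hm' hc !zl !zr addr0 add0r subrKC.
Qed.

(* With [u], [w] the two links, [x a = u e u^-1] and [a x = w e w^-1], and
   [m = e w^-1 a u e] is invertible in [e R e] with inverse [e u^-1 x w e];
   then [a = (w (m + 1 - e)) e u^-1]. *)
Lemma regular_factor_ring a x e : a * x * a = a -> e * e = e ->
  invertible (idem_link (x * a) e) -> invertible (idem_link (a * x) e) ->
  exists b c, [/\ invertible b, invertible c & a = b * e * c].
Proof.
move=> haxa he [u' [uu' u'u]] [w' [ww' w'w]].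
have he0 : (1 - e) * e = 0 by rewrite mulrBl mul1r he subrr.
set u := idem_link (x * a) e in uu' u'u *; set w := idem_link (a * x) e in ww' w'w *.
have fu : x * a * u = u * e.
  by apply: idem_link_intertwines => //; rewrite -mulrA (mulrA a) haxa.
have gw : a * x * w = w * e by apply: idem_link_intertwines; rewrite ?mulrA ?haxa.
have ueu : u * e * u' = x * a by rewrite -fu -mulrA uu' mulr1.
have wew : w * e * w' = a * x by rewrite -gw -mulrA ww' mulr1.
have axaL z := mulr_lift3 z haxa; have eeL z := mulr_lift2 z he.
have ueuL z := mulr_lift3 z ueu; have wewL z := mulr_lift3 z wew.
have fuL z := mulr_lift3 z fu; have gwL z := mulr_lift3 z gw.
have u'uL z := mulr_lift2 z u'u; have w'wL z := mulr_lift2 z w'w.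
have [k' [kk' k'k]] : invertible (e * (w' * a * u) * e + (1 - e)).
  apply: (corner_invertible (y' := u' * x * w)) => //; rewrite !mulrA.
    by rewrite eeL ueuL !mulrA axaL gwL !mulrA w'wL eeL mulr1 he.
  by rewrite eeL wewL !mulrA axaL fuL !mulrA u'uL eeL mulr1 he.
set k := _ + (1 - e) in kk' k'k *.
exists (w * k), u'; split; first by apply: invertibleM; [exists w' | exists k'].
  by exists u.
have hke : k * e = e * (w' * a * u) * e.
  by rewrite /k mulrDl he0 addr0; apply: eeL.
by rewrite -(mulrA w) hke !mulrA wew haxa ueuL mulrA haxa.
Qed.

Lemma factor_regular_ring b e c : e * e = e -> invertible b -> invertible c ->
  exists x, (b * e * c) * x * (b * e * c) = b * e * c.
Proof.
move=> he [b' [bb' b'b]] [c' [cc' c'c]]; exists (c' * e * b').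
rewrite !mulrA (mulr_lift2 _ cc') mulr1 (mulr_lift2 _ he).
by rewrite (mulr_lift2 _ b'b) mulr1 (mulr_lift2 _ he).
Qed.

End RingFacts.

Section FiniteSums.
Variables (K : fieldType) (d : Order.disp_t) (P : porderType d).
Implicit Types (f g : P -> K).

Definition finsupp f := exists s : seq P, forall z, f z != 0 -> z \in s.

Lemma sum_support_cover f (s1 s2 : seq P) : uniq s1 -> uniq s2 ->
  (forall z, f z != 0 -> z \in s1) -> (forall z, f z != 0 -> z \in s2) ->
  \sum_(z <- s1) f z = \sum_(z <- s2) f z.
Proof.
move=> u1 u2 c1 c2.
have nz (s : seq P) : \sum_(z <- s) f z = \sum_(z <- s | f z != 0) f z.
  by rewrite [RHS]big_mkcond; apply: eq_bigr => z _; case: eqP.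
rewrite (nz s1) (nz s2) -big_filter -[RHS]big_filter.
apply/perm_big/uniq_perm; rewrite ?filter_uniq // => z.
by rewrite !mem_filter; case: (boolP (f z != 0)) => //= /[dup] /c1 -> /c2 ->.
Qed.

Lemma fsumE f (s : seq P) : (forall z, f z != 0 -> z \in s) ->
  fsum f = \sum_(z <- undup s) f z.
Proof.
move=> hs; rewrite /fsum /fsupp_seq.
case: ClassicalEpsilon.excluded_middle_informative => [H|[]]; last by exists s.
case: (ClassicalEpsilon.constructive_indefinite_description _ H) => s0 /= h0.
by apply: sum_support_cover; rewrite ?undup_uniq // => z /[dup] /h0 + /hs; rewrite !mem_undup.
Qed.

Lemma fsum_notfin f : ~ finsupp f -> fsum f = 0.
Proof.
by move=> hf; rewrite /fsum /fsupp_seq; case: ClassicalEpsilon.excluded_middle_informative => //; rewrite big_nil.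
Qed.

Lemma fsum0 : fsum (fun _ : P => 0 : K) = 0.
Proof. by rewrite (@fsumE _ [::]) ?big_nil // => z; rewrite eqxx. Qed.

Lemma fsum_neq0 f : fsum f != 0 -> exists z, f z != 0.
Proof.
apply: contraNP => /forallNP hf.
suff -> : f = (fun _ => 0) by rewrite fsum0.
by apply/funext => z; apply/eqP/negbNE/negP/hf.
Qed.

Lemma fsumD f g : finsupp f -> finsupp g ->
  fsum (fun z => f z + g z) = fsum f + fsum g.
Proof.
move=> [s1 h1] [s2 h2].
have c1 z : f z != 0 -> z \in s1 ++ s2 by rewrite mem_cat => /h1 ->.
have c2 z : g z != 0 -> z \in s1 ++ s2 by rewrite mem_cat orbC => /h2 ->.
rewrite (fsumE c1) (fsumE c2) -big_split (@fsumE _ (s1 ++ s2)) // => z.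
apply: contraR; rewrite mem_cat negb_or => /andP[n1 n2].
by rewrite (eqP (contraR (@h1 z) n1)) (eqP (contraR (@h2 z) n2)) addr0.
Qed.

Lemma fsumMr f (c : K) : fsum (fun z => f z * c) = fsum f * c.
Proof.
have [->|hc] := eqVneq c 0.
  by rewrite mulr0 -[RHS]fsum0; congr fsum; apply/funext => z; rewrite mulr0.
have [[s hs]|hn] := pselect (finsupp f).
  rewrite (fsumE hs) (@fsumE _ s) ?big_distrl // => z.
  by rewrite mulf_eq0 negb_or => /andP[/hs].
rewrite (fsum_notfin hn) mul0r fsum_notfin // => -[s hs]; apply: hn.
by exists s => z hz; apply: hs; rewrite mulf_eq0 negb_or hz hc.
Qed.

Lemma fsumMl f (c : K) : fsum (fun z => c * f z) = c * fsum f.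
Proof.
by rewrite mulrC -fsumMr; congr fsum; apply/funext => z; rewrite mulrC.
Qed.

Lemma fsum_exchange (F : P -> P -> K) (L : seq P) :
  (forall w z, F w z != 0 -> (w \in L) && (z \in L)) ->
  fsum (fun z => fsum (fun w => F w z)) = fsum (fun w => fsum (fun z => F w z)).
Proof.
move=> hL.
have -> : (fun z => fsum (fun w => F w z)) = (fun z => \sum_(w <- undup L) F w z).
  by apply/funext => z; apply: fsumE => w /hL /andP[].
have -> : (fun w => fsum (fun z => F w z)) = (fun w => \sum_(z <- undup L) F w z).
  by apply/funext => w; apply: fsumE => z /hL /andP[].
rewrite (@fsumE _ L) => [|z]; last first.
  by apply: contraR => hz; rewrite big1 // => w _; apply/eqP; apply: contraR hz => /hL /andP[].
rewrite (@fsumE _ L) => [|w]; last first.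
  by apply: contraR => hw; rewrite big1 // => z _; apply/eqP; apply: contraR hw => /hL /andP[].
exact: exchange_big.
Qed.

End FiniteSums.

Section Convolution.
Variables (K : fieldType) (d : Order.disp_t) (P : porderType d).
Implicit Types (a b c : series K P) (x y z u w : P).

Definition covers a x y (L : seq P) :=
  forall u w, x <= u -> u < w -> w <= y -> a u w != 0 -> (u \in L) && (w \in L).

Lemma finitary_cover a x y : finitary a ->
  exists L : seq P, [/\ x \in L, y \in L & covers a x y L].
Proof.
move=> ha; case: (boolP (x < y)) => hxy.
  have [s hs] := ha x y hxy.
  exists (x :: y :: map fst s ++ map snd s); split; rewrite ?inE ?eqxx ?orbT //.
  move=> u w h1 h2 h3 /(hs u w h1 h2 h3) hm.
  by rewrite !inE !mem_cat (map_f fst hm) (map_f snd hm) !orbT.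
exists [:: x; y]; split; rewrite ?inE ?eqxx ?orbT // => u w h1 h2 h3 _.
by move: hxy; rewrite (le_lt_trans h1 (lt_le_trans h2 h3)).
Qed.

Lemma cover_row a x y L : x \in L -> covers a x y L ->
  forall w, x <= w -> w <= y -> a x w != 0 -> w \in L.
Proof.
move=> hx hL w h1 h2 h3; have [<-//|hne] := eqVneq x w.
have hlt : x < w by rewrite lt_neqAle hne h1.
by case/andP: (hL x w (lexx x) hlt h2 h3).
Qed.

Lemma cover_col a x y L : y \in L -> covers a x y L ->
  forall z, x <= z -> z <= y -> a z y != 0 -> z \in L.
Proof.
move=> hy hL z h1 h2 h3; have [->//|hne] := eqVneq z y.
have hlt : z < y by rewrite lt_neqAle hne h2.
by case/andP: (hL z y h1 hlt (lexx y) h3).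
Qed.

Lemma conv_out a b x y : ~~ (x <= y) -> conv a b x y = 0.
Proof.
move=> h; rewrite /conv -[RHS](@fsum0 K d P); congr fsum; apply/funext => z.
by case: (boolP (_ && _)) => // /andP[h1 h2]; move: h; rewrite (le_trans h1 h2).
Qed.

Lemma conv_local a a' b b' x y :
  (forall z, x <= z -> z <= y -> a x z = a' x z) ->
  (forall z, x <= z -> z <= y -> b z y = b' z y) ->
  conv a b x y = conv a' b' x y.
Proof.
move=> h1 h2; rewrite /conv; congr fsum; apply/funext => z.
by case: (boolP (_ && _)) => // /andP[l1 l2]; rewrite h1 ?h2.
Qed.

Lemma conv_diag a b x : conv a b x x = a x x * b x x.
Proof.
rewrite /conv (@fsumE _ _ _ _ [:: x]) /= ?big_seq1 ?lexx // => z.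
by case: (boolP (_ && _)) => [hz _|]; rewrite ?eqxx // inE eq_le andbC.
Qed.

Lemma conv_finsupp a b x y : finitary a ->
  finsupp (fun z => if (x <= z) && (z <= y) then a x z * b z y else 0).
Proof.
move=> ha; have [L [hx _ hL]] := finitary_cover x y ha; exists L => z.
case: (boolP (_ && _)) => [/andP[h1 h2]|]; last by rewrite eqxx.
by rewrite mulf_eq0 negb_or => /andP[h3 _]; apply: (cover_row hx hL h1 h2 h3).
Qed.

Lemma conv_finitary a b : finitary a -> finitary b -> finitary (conv a b).
Proof.
move=> ha hb x y hxy.
have [La [_ _ hLa]] := finitary_cover x y ha; have [Lb [_ _ hLb]] := finitary_cover x y hb.
exists [seq (p, q) | p <- La ++ Lb, q <- La ++ Lb] => u v h1 h2 h3.
move/fsum_neq0 => [z]; case: (boolP (_ && _)) => [/andP[l1 l2]|]; last by rewrite eqxx.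
rewrite mulf_eq0 negb_or => /andP[na nb].
have hu : u \in La ++ Lb.
  rewrite mem_cat; have [e|ne] := eqVneq u z.
    by subst z; case/andP: (hLb u v h1 h2 h3 nb) => ->; rewrite orbT.
  have lt : u < z by rewrite lt_neqAle ne l1.
  by case/andP: (hLa u z h1 lt (le_trans l2 h3) na) => ->.
have hv : v \in La ++ Lb.
  rewrite mem_cat; have [e|ne] := eqVneq z v.
    by subst z; case/andP: (hLa u v h1 h2 h3 na) => _ ->.
  have lt : z < v by rewrite lt_neqAle ne l2.
  by case/andP: (hLb z v (le_trans h1 l1) lt h3 nb) => _ ->; rewrite orbT.
by apply/allpairsP; exists (u, v).
Qed.

(* Associativity: both sides are the double sum of [a x w * b w z * c z y]
   over [x <= w <= z <= y], whose support is finite when [a] and [c] are finitary. *)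
Lemma conv_assoc a b c : finitary a -> finitary c ->
  conv (conv a b) c = conv a (conv b c).
Proof.
move=> ha hc; apply/funext => x; apply/funext => y.
pose G w z := if [&& x <= w, w <= z & z <= y] then a x w * b w z * c z y else 0.
have -> : conv (conv a b) c x y = fsum (fun z => fsum (fun w => G w z)).
  rewrite /conv; congr fsum; apply/funext => z.
  case: (boolP (_ && _)) => [/andP[l1 l2]|hn].
    rewrite -fsumMr; congr fsum; apply/funext => w.
    by rewrite /G l2 andbT; case: (_ && _); rewrite ?mul0r.
  rewrite -[LHS](@fsum0 K d P); congr fsum; apply/funext => w.
  rewrite /G; case: (boolP [&& _, _ & _]) => // /and3P[l1 l2 l3].
  by move: hn; rewrite l3 (le_trans l1 l2).
have -> : conv a (conv b c) x y = fsum (fun w => fsum (fun z => G w z)).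
  rewrite /conv; congr fsum; apply/funext => w.
  case: (boolP (_ && _)) => [/andP[l1 l2]|hn].
    rewrite -fsumMl; congr fsum; apply/funext => z.
    by rewrite /G l1 /=; case: (_ && _); rewrite ?mulr0 ?mulrA.
  rewrite -[LHS](@fsum0 K d P); congr fsum; apply/funext => z.
  rewrite /G; case: (boolP [&& _, _ & _]) => // /and3P[l1 l2 l3].
  by move: hn; rewrite l1 (le_trans l2 l3).
have [La [hxa _ hLa]] := finitary_cover x y ha.
have [Lc [_ hyc hLc]] := finitary_cover x y hc.
apply: (@fsum_exchange _ _ _ _ (La ++ Lc)) => w z.
rewrite /G; case: (boolP [&& _, _ & _]) => [/and3P[l1 l2 l3]|]; last by rewrite eqxx.
rewrite !mulf_eq0 !negb_or => /andP[/andP[n1 _] n3].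
rewrite !mem_cat (cover_row hxa hLa l1 (le_trans l2 l3) n1).
by rewrite (cover_col hyc hLc (le_trans l1 l2) l3 n3) orbT.
Qed.

Lemma conv_addl a b c : finitary a -> finitary b ->
  conv (fun x y => a x y + b x y) c = (fun x y => conv a c x y + conv b c x y).
Proof.
move=> ha hb; apply/funext => x; apply/funext => y.
rewrite /conv -fsumD; try exact: conv_finsupp.
congr fsum; apply/funext => z.
by case: (_ && _); rewrite ?mulrDl ?addr0.
Qed.

Lemma conv_addr a b c : finitary a ->
  conv a (fun x y => b x y + c x y) = (fun x y => conv a b x y + conv a c x y).
Proof.
move=> ha; apply/funext => x; apply/funext => y.
rewrite /conv -fsumD; try exact: conv_finsupp.
congr fsum; apply/funext => z.
by case: (_ && _); rewrite ?mulrDr ?addr0.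
Qed.

Definition normalized a := forall x y, ~~ (x <= y) -> a x y = 0.

Lemma conv_delta_l a : normalized a -> conv (@delta K d P) a = a.
Proof.
move=> ha; apply/funext => x; apply/funext => y.
case: (boolP (x <= y)) => hxy; last by rewrite conv_out // ha.
rewrite /conv (@fsumE _ _ _ _ [:: x]) /= ?big_seq1 ?lexx ?hxy /delta ?eqxx ?mul1r // => z.
case: (_ && _); last by rewrite eqxx.
by case: (eqVneq x z) => [->|]; rewrite ?inE ?eqxx // mul0r eqxx.
Qed.

Lemma conv_delta_r a : normalized a -> conv a (@delta K d P) = a.
Proof.
move=> ha; apply/funext => x; apply/funext => y.
case: (boolP (x <= y)) => hxy; last by rewrite conv_out // ha.
rewrite /conv (@fsumE _ _ _ _ [:: y]) /= ?big_seq1 ?lexx ?hxy /delta ?eqxx ?mulr1 // => z.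
case: (_ && _); last by rewrite eqxx.
by case: (eqVneq z y) => [->|]; rewrite ?inE ?eqxx // mulr0 eqxx.
Qed.

End Convolution.

Section IncidenceRing.
Variables (K : fieldType) (d : Order.disp_t) (P : porderType d).
Implicit Types (a b : series K P).

Definition fi_series a := finitary a /\ normalized a.

Record fi := Fi { fval : series K P; fi_seriesP : fi_series fval }.

HB.instance Definition _ := gen_eqMixin fi.
HB.instance Definition _ := gen_choiceMixin fi.

Lemma fval_inj (r s : fi) : fval r = fval s -> r = s.
Proof.
by case: r s => [f hf] [g hg] /= e; subst g; congr Fi; apply: Prop_irrelevance.
Qed.

Lemma fi_series0 : fi_series (fun _ _ => 0).
Proof. by split=> // x y _; exists [::] => u v _ _ _; rewrite eqxx. Qed.

Lemma fi_seriesD a b : fi_series a -> fi_series b -> fi_series (fun x y => a x y + b x y).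
Proof.
move=> [fa na] [fb nb]; split=> [x y hxy|x y h]; last by rewrite na ?nb ?addr0.
have [s1 h1] := fa x y hxy; have [s2 h2] := fb x y hxy.
exists (s1 ++ s2) => u v l1 l2 l3 hn; rewrite mem_cat.
have [e|ne] := eqVneq (a u v) 0; last by rewrite (h1 u v l1 l2 l3 ne).
by move: hn; rewrite e add0r => /(h2 u v l1 l2 l3) ->; rewrite orbT.
Qed.

Lemma fi_seriesN a : fi_series a -> fi_series (fun x y => - a x y).
Proof.
move=> [fa na]; split=> [x y hxy|x y h]; last by rewrite na ?oppr0.
by have [s hs] := fa x y hxy; exists s => u v l1 l2 l3; rewrite oppr_eq0; apply: hs.
Qed.

Lemma fi_series_diag (phi : P -> K) : fi_series (fun x y => if x == y then phi x else 0).
Proof.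
split=> [x y _|x y h]; first by exists [::] => u v _ l _; rewrite (lt_eqF l) eqxx.
by case: eqP h => // <-; rewrite lexx.
Qed.

Lemma fi_series1 : fi_series (@delta K d P).
Proof. exact: (fi_series_diag (fun _ => 1)). Qed.

Lemma fi_seriesM a b : fi_series a -> fi_series b -> fi_series (conv a b).
Proof. by move=> [fa _] [fb _]; split; [apply: conv_finitary | move=> x y; apply: conv_out]. Qed.

Definition fi0 := Fi fi_series0.
Definition fiD (r s : fi) := Fi (fi_seriesD (fi_seriesP r) (fi_seriesP s)).
Definition fiN (r : fi) := Fi (fi_seriesN (fi_seriesP r)).
Definition fi1 := Fi fi_series1.
Definition fiM (r s : fi) := Fi (fi_seriesM (fi_seriesP r) (fi_seriesP s)).

Lemma fval_finitary (r : fi) : finitary (fval r). Proof. exact: (fi_seriesP r).1. Qed.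
Lemma fval_normalized (r : fi) : normalized (fval r). Proof. exact: (fi_seriesP r).2. Qed.

Lemma fiDA : associative fiD.
Proof. by move=> r s t; apply: fval_inj; do 2 apply/funext => ? /=; rewrite addrA. Qed.
Lemma fiDC : commutative fiD.
Proof. by move=> r s; apply: fval_inj; do 2 apply/funext => ? /=; rewrite addrC. Qed.
Lemma fi0D : left_id fi0 fiD.
Proof. by move=> r; apply: fval_inj; do 2 apply/funext => ? /=; rewrite add0r. Qed.
Lemma fiND : left_inverse fi0 fiN fiD.
Proof. by move=> r; apply: fval_inj; do 2 apply/funext => ? /=; rewrite addNr. Qed.
Lemma fiMA : associative fiM.
Proof. by move=> r s t; apply: fval_inj; rewrite /= conv_assoc //; apply: fval_finitary. Qed.
Lemma fi1M : left_id fi1 fiM.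
Proof. by move=> r; apply: fval_inj; rewrite /= conv_delta_l //; apply: fval_normalized. Qed.
Lemma fiM1 : right_id fi1 fiM.
Proof. by move=> r; apply: fval_inj; rewrite /= conv_delta_r //; apply: fval_normalized. Qed.
Lemma fiMDl : left_distributive fiM fiD.
Proof. by move=> r s t; apply: fval_inj; rewrite /= conv_addl //; apply: fval_finitary. Qed.
Lemma fiMDr : right_distributive fiM fiD.
Proof. by move=> r s t; apply: fval_inj; rewrite /= conv_addr //; apply: fval_finitary. Qed.

HB.instance Definition _ :=
  GRing.isPzRing.Build fi fiDA fiDC fi0D fiND fiMA fi1M fiM1 fiMDl fiMDr.

End IncidenceRing.

Section Diagonal.
Variables (K : fieldType) (d : Order.disp_t) (P : porderType d).
Local Notation FI := (fi K P).
Implicit Types (r s : FI).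

Lemma fvalM r s : fval (r * s) = conv (fval r) (fval s). Proof. by []. Qed.

Lemma fval_sum (F : nat -> FI) M x y :
  fval (\sum_(k < M) F k) x y = \sum_(k < M) fval (F k) x y.
Proof. by elim: M => [|M IH]; rewrite ?big_ord0 // !big_ord_recr /= IH. Qed.

Definition dg r (p : P) : K := fval r p p.

Lemma dgD r s p : dg (r + s) p = dg r p + dg s p. Proof. by []. Qed.
Lemma dgB r s p : dg (r - s) p = dg r p - dg s p. Proof. by []. Qed.
Lemma dg1 p : dg 1 p = 1. Proof. by rewrite /dg /= /delta eqxx. Qed.
Lemma dgM r s p : dg (r * s) p = dg r p * dg s p.
Proof. by rewrite /dg fvalM conv_diag. Qed.

(* If [r] and [s] have the same idempotent diagonal entry at [p], their link
   has diagonal entry [t^2 + (1 - t)^2 = 1] there. *)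
Lemma dg_idem_link r s p : dg r p = dg s p -> dg r p * dg r p = dg r p ->
  dg (idem_link r s) p = 1.
Proof.
move=> hrs ht; rewrite dgD !dgM !dgB dg1 -hrs ht mulrBr mulr1 mulrBl mul1r ht.
by rewrite subrr subr0 subrKC.
Qed.

End Diagonal.

(* If [n] in FI(P) has zero diagonal, [1 - n] is invertible with inverse the
   geometric series of [n]: a nonzero entry of [n ^+ k] at [(z, w)] inside
   [x, y] needs a strict chain of length [k] through the finite cover of
   [x, y], so entrywise the series is a finite sum. *)
Section UnipotentInverse.
Variables (K : fieldType) (d : Order.disp_t) (P : porderType d).
Local Notation FI := (fi K P).
Variable n : FI.
Hypothesis n_diag0 : forall p, dg n p = 0.

Lemma pow_vanish_locally x y : exists M : nat, forall k z w,
  (M <= k)%N -> x <= z -> w <= y -> fval (n ^+ k) z w = 0.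
Proof.
have [L [_ _ hL]] := finitary_cover x y (fval_finitary n).
have chain k z w : x <= z -> w <= y -> fval (n ^+ k) z w != 0 ->
    (k <= count (fun q => (z <= q)%O) L)%N.
  elim: k z => [//|k IH] z hxz hwy.
  rewrite exprS fvalM => /fsum_neq0 [t].
  case: (boolP (_ && _)) => [/andP[l1 l2]|]; last by rewrite eqxx.
  rewrite mulf_eq0 negb_or => /andP[n1 n2].
  have lt : z < t by rewrite lt_neqAle l1 andbT; apply: contra_neq n1 => <-; apply: n_diag0.
  case/andP: (hL z t hxz lt (le_trans l2 hwy) n1) => zL _.
  apply: leq_ltn_trans (IH t (le_trans hxz l1) hwy n2) _.
  apply: (count_sub_lt _ zL) => /=; [move=> q; exact: le_trans (ltW lt) | exact: lexx |].
  by rewrite lt_geF.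
exists (size L).+1 => k z w hk hxz hwy; apply/eqP/negbNE/negP.
move=> /(chain k z w hxz hwy) hc.
by move: (leq_trans hk (leq_trans hc (count_size _ L))); rewrite ltnn.
Qed.

Definition pow_bound x y : nat := projT1 (cid (pow_vanish_locally x y)).

Lemma pow_boundP x y k z w :
  (pow_bound x y <= k)%N -> x <= z -> w <= y -> fval (n ^+ k) z w = 0.
Proof. exact: (projT2 (cid (pow_vanish_locally x y))). Qed.

Definition geom_series : series K P := fun x y =>
  if x <= y then \sum_(k < pow_bound x y) fval (n ^+ k) x y else 0.

Lemma geom_seriesE z w M : z <= w ->
  (forall k, (M <= k)%N -> fval (n ^+ k) z w = 0) ->
  geom_series z w = \sum_(k < M) fval (n ^+ k) z w.
Proof.
move=> hzw hM; rewrite /geom_series hzw.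
have hB k : (pow_bound z w <= k)%N -> fval (n ^+ k) z w = 0.
  by move=> hk; apply: pow_boundP hk (lexx z) (lexx w).
by rewrite -(sum_ord_trunc hB (leq_maxr M _)) (sum_ord_trunc hM (leq_maxl _ _)).
Qed.

Lemma geom_series_fi : fi_series geom_series.
Proof.
split=> [x y hxy|x y h]; last by rewrite /geom_series (negbTE h).
have supp N : exists s : seq (P * P), forall k, (k < N)%N -> forall u w,
    x <= u -> u < w -> w <= y -> fval (n ^+ k) u w != 0 -> (u, w) \in s.
  elim: N => [|N [s hs]]; first by exists [::].
  have [s2 h2] := fval_finitary (n ^+ N) hxy.
  exists (s ++ s2) => k; rewrite ltnS leq_eqVlt => /orP[/eqP-> | hk] u w l1 l2 l3 hn.
    by rewrite mem_cat (h2 u w l1 l2 l3 hn) orbT.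
  by rewrite mem_cat (hs k hk u w l1 l2 l3 hn).
have [s hs] := supp (pow_bound x y); exists s => u w l1 l2 l3.
have hM k : (pow_bound x y <= k)%N -> fval (n ^+ k) u w = 0.
  by move=> hk; apply: pow_boundP hk l1 l3.
rewrite (geom_seriesE (ltW l2) hM) => hn; apply: contrapT => hno; move/eqP: hn; apply.
rewrite big1 // => -[k hk] _ /=; apply/eqP/negbNE/negP => /(hs k hk u w l1 l2 l3).
exact: hno.
Qed.

Definition geom : FI := Fi geom_series_fi.

(* Near an entry [(x, y)], [geom] agrees with the finite geometric sum up to
   [pow_bound x y]; both products with [1 - n] thus reduce to [1 - n ^+ M]. *)
Lemma one_sub_invertible : invertible (1 - n).
Proof.
have trunc x y z w : x <= z -> w <= y -> z <= w ->
    fval geom z w = fval (\sum_(k < pow_bound x y) n ^+ k) z w.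
  move=> hxz hwy hzw; rewrite fval_sum; apply: geom_seriesE => // k hk.
  exact: pow_boundP hk hxz hwy.
have ends x y : x <= y -> fval (1 - n ^+ pow_bound x y) x y = fval (1 : FI) x y.
  by move=> hxy; rewrite /= (pow_boundP (leqnn _) (lexx x) (lexx y)) subr0.
exists geom; split; apply: fval_inj; apply/funext => x; apply/funext => y;
  (case: (boolP (x <= y)) => hxy; last by rewrite !fval_normalized);
  set S := \sum_(k < pow_bound x y) n ^+ k.
  rewrite fvalM (conv_local (a' := fval (1 - n)) (b' := fval S)) //.
    by rewrite -fvalM geom_sum_l ends.
  by move=> z hxz hzy; apply: trunc.
rewrite fvalM (conv_local (a' := fval S) (b' := fval (1 - n))) //.
  by rewrite -fvalM geom_sum_r ends.
by move=> z hxz hzy; apply: trunc.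
Qed.

End UnipotentInverse.

Lemma unit_diag_invertible (K : fieldType) (d : Order.disp_t) (P : porderType d)
  (u : fi K P) : (forall p, dg u p = 1) -> invertible u.
Proof.
move=> hu; rewrite -(subKr 1 u); apply: one_sub_invertible => p.
by rewrite dgB dg1 hu subrr.
Qed.

Section Transfer.
Variables (K : fieldType) (d : Order.disp_t) (P : porderType d).
Local Notation FI := (fi K P).
Implicit Types (a b : series K P) (r s : FI).

Definition normalize a : series K P := fun x y => if x <= y then a x y else 0.

Lemma normalize_fi a : finitary a -> fi_series (normalize a).
Proof.
move=> ha; split=> [x y hxy|x y h]; last by rewrite /normalize (negbTE h).
by have [s hs] := ha x y hxy; exists s => u v l1 l2 l3; rewrite /normalize (ltW l2); apply: hs.
Qed.

Definition to_fi a (ha : finitary a) : FI := Fi (normalize_fi ha).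

Lemma eqI_to_fi a (ha : finitary a) : eqI (fval (to_fi ha)) a.
Proof. by move=> x y hxy; rewrite /= /normalize hxy. Qed.

Lemma fi_eqI r s : eqI (fval r) (fval s) -> r = s.
Proof.
move=> h; apply: fval_inj; apply/funext => x; apply/funext => y.
by case: (boolP (x <= y)) => [/h //|hxy]; rewrite !fval_normalized.
Qed.

Lemma fval_to_fiMl a (ha : finitary a) r : fval (to_fi ha * r) = conv a (fval r).
Proof.
by apply/funext => x; apply/funext => y; apply: conv_local => // z hxz _; rewrite /= /normalize hxz.
Qed.

Lemma fval_to_fiMr a (ha : finitary a) r : fval (r * to_fi ha) = conv (fval r) a.
Proof.
by apply/funext => x; apply/funext => y; apply: conv_local => // z _ hzy; rewrite /= /normalize hzy.
Qed.

Lemma fval_to_fiM a b (ha : finitary a) (hb : finitary b) :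
  fval (to_fi ha * to_fi hb) = conv a b.
Proof.
rewrite fval_to_fiMl; apply/funext => x; apply/funext => y.
by apply: conv_local => // z _ hzy; rewrite /= /normalize hzy.
Qed.

Lemma invertibleI_fval r : invertible r -> invertibleI (fval r).
Proof.
by move=> [s [rs sr]]; exists (fval s); split; [apply: fval_finitary | rewrite -!fvalM rs sr].
Qed.

Lemma invertible_to_fi a (ha : finitary a) : invertibleI a -> invertible (to_fi ha).
Proof.
move=> [b [hb [ab ba]]]; exists (to_fi hb).
by split; apply: fi_eqI; rewrite fval_to_fiM.
Qed.

Definition diag_fi (phi : P -> K) : FI := Fi (fi_series_diag phi).

Lemma dg_diag_fi (phi : P -> K) p : dg (diag_fi phi) p = phi p.
Proof. by rewrite /dg /= eqxx. Qed.

Lemma diag_fi_idem (phi : P -> K) : (forall p, phi p * phi p = phi p) ->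
  diag_fi phi * diag_fi phi = diag_fi phi.
Proof.
move=> hphi; apply: fval_inj; apply/funext => x; apply/funext => y; rewrite fvalM.
have [<-|ne] := eqVneq x y; first by rewrite conv_diag /= eqxx hphi.
rewrite /= (negbTE ne) /conv -[RHS](@fsum0 K d P); congr fsum; apply/funext => z.
case: (_ && _) => //; have [<-|_] := eqVneq x z; last by rewrite mul0r.
by rewrite (negbTE ne) mulr0.
Qed.

End Transfer.

Section Factorization.
Variables (K : fieldType) (d : Order.disp_t) (P : porderType d).
Local Notation FI := (fi K P).

Definition unit_idem_factorization (a : series K P) : Prop :=
  exists (e b c : series K P),
    finitary e /\ diagonal e /\ idempotentI e /\
    finitary b /\ invertibleI b /\ finitary c /\ invertibleI c /\
    eqI a (conv (conv b e) c).

(* Regular implies factorization: with [a x a = a], the diagonal [phi] of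
   [x a] (equal to that of [a x]) is idempotent; its diagonal element [E]
   has invertible links with [x a] and [a x] (their diagonal is 1), so the
   ring-theoretic factorization applies. *)
Lemma regular_factorization (a : series K P) (ha : finitary a) :
  regularI a -> unit_idem_factorization a.
Proof.
move=> [c [hc hreg]]; set A := to_fi ha; set X := to_fi hc.
have hAXA : A * X * A = A.
  apply: fi_eqI; rewrite fval_to_fiMr fval_to_fiM => x y hxy.
  by rewrite hreg // eqI_to_fi.
pose phi p := dg (X * A) p.
have phi_idem p : phi p * phi p = phi p.
  by rewrite /phi dgM -!mulrA (mulrA (dg A p)) -!dgM hAXA.
have phi_sym p : dg (A * X) p = phi p by rewrite /phi !dgM mulrC.
set E := diag_fi phi.
have hE : E * E = E by apply: diag_fi_idem.
have link_unit f : (forall p, dg f p = phi p) -> invertible (idem_link f E).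
  move=> hf; apply: unit_diag_invertible => p.
  by apply: dg_idem_link; rewrite hf ?dg_diag_fi.
have [B [C [hB hC hA]]] :=
  regular_factor_ring hAXA hE (link_unit _ (fun=> erefl)) (link_unit _ phi_sym).
exists (fval E), (fval B), (fval C).
do ![exact: fval_finitary | exact: invertibleI_fval | split].
- by move=> x y _ /negbTE /= ->.
- by rewrite /idempotentI -fvalM hE.
by rewrite -!fvalM -hA => x y hxy; rewrite eqI_to_fi.
Qed.

(* Factorization implies regular: transfer [a = b e c] to FI(P), where
   [c^-1 e b^-1] is a generalized inverse of [a]. *)
Lemma factorization_regular (a : series K P) (ha : finitary a) :
  unit_idem_factorization a -> regularI a.
Proof.
move=> [e [b [c [he [_ [hee [hb [hbI [hc [hcI habc]]]]]]]]]].
set A := to_fi ha; set E := to_fi he; set B := to_fi hb; set C := to_fi hc.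
have hE : E * E = E.
  by apply: fi_eqI; rewrite fval_to_fiM => x y hxy; rewrite hee // eqI_to_fi.
have hA : A = B * E * C.
  apply: fi_eqI; rewrite fval_to_fiMr fval_to_fiM => x y hxy.
  by rewrite eqI_to_fi // habc.
have [X hX] := factor_regular_ring hE (invertible_to_fi hb hbI) (invertible_to_fi hc hcI).
exists (fval X); split; first exact: fval_finitary.
move=> x y hxy; rewrite -(eqI_to_fi ha hxy) -/A.
by rewrite -fval_to_fiMl -fval_to_fiMr -/A hA hX.
Qed.

End Factorization.

Theorem theorem4 (K : fieldType) (d : Order.disp_t) (P : porderType d)
  (a : series K P) (ha : finitary a) :
  regularI a <->
  exists (e b c : series K P),
    finitary e /\ diagonal e /\ idempotentI e /\
    finitary b /\ invertibleI b /\ finitary c /\ invertibleI c /\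
    eqI a (conv (conv b e) c).
Proof.
split; [exact: regular_factorization | exact: factorization_regular].
Qed.
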